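(* Let $g\ge2$, $n\ge1$, let $(t_1,\ldots,t_n)$ be a generic $n$-tuple of elements of $T$, let $l\in\{1,\ldots,n\}$, let $X$ and $Y$ be disjoint sets with $X\sqcup Y=\{c_i\mid i\in\{1,\ldots,n\}\setminus\{l\}\}$, let $(i,j,k)$ be a permutation of $(1,2,3)$, and let $f:\{1,\ldots,n\}\to\{1,2,3\}$ be a function. Then the collection of sections $$\{s^l_{ij}(x), s^l_{ik}(x)\mid x\in\{a_1,\ldots,a_g,b_1,\ldots,b_g\}\cup X\}\cup\{s^l_{f(q),j}(c_q), s^l_{f(q),k}(c_q)\mid c_q\in Y\}$$ has no common zeros on $S_g(t_1,\ldots,t_n)$.
   Context: Let $\Sigma$ be a compact Riemann surface of genus $g$, $p_1,\ldots,p_n\in\Sigma$ distinct points, and fix the presentation $\pi_1(\Sigma\setminus\{p_1,\ldots,p_n\}) = \langle a_1,\ldots,a_g,b_1,\ldots,b_g,c_1,\ldots,c_n \mid \prod_{i=1}^g[a_i,b_i]=\prod_{j=1}^n c_j\rangle$. Let $G=SU(3)$, $T\subset G$ the diagonal maximal torus. An $n$-tuple $(t_1,\ldots,t_n)$ in $T$ is generic if each $t_j$ has centralizer $T$ in $G$ and no product $\lambda_1\cdots\lambda_n$ with $\lambda_i$ an eigenvalue of $t_i$ equals $1$. Let $S_g(t_1,\ldots,t_n) := \{\rho\in\mathrm{Hom}(\pi_1(\Sigma\setminus\{p_1,\ldots,p_n\}),G)\mid\rho(c_i)\sim t_i\ \forall i\}/G$ (conjugation quotient), and $V^l_g(t_1,\ldots,t_n):=\{\rho\mid\rho(c_l)=t_l,\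 \rho(c_i)\sim t_i\ \forall i\}$, a $T$-bundle over $S_g(t_1,\ldots,t_n)$ under conjugation. For $1\le j,k\le 3$ let $\mathbb{C}_{(jk)}$ (resp. $\mathbb{C}_{(j)}$) be the representation of $T$ in which $\mathrm{diag}(e^{i\theta_1},e^{i\theta_2},e^{i\theta_3})$ acts by $e^{i(\theta_j-\theta_k)}$ (resp. $e^{i\theta_j}$), and $L^l_{jk}$ (resp. $L^l_j$) the associated line bundle over $S_g(t_1,\ldots,t_n)$. Two kinds of sections are used (note the comma distinguishing them). (i) For a generator $x\in\{a_1,\ldots,a_g,b_1,\ldots,b_g,c_1,\ldots,c_n\}\setminus\{c_l\}$, $s^l_{jk}(x)$ is the section of $L^l_{jk}$ induced by the $T$-equivariant map $\rho\mapsto(\rho(x))_{jk}$ on $V^l_g(t_1,\ldots,t_n)$; it vanishes at $[\rho]$ iff $(\rho(x))_{jk}=0$ for a representative $\rho\in V^l_g(t_1,\ldots,t_n)$. (ii) For $c_{i'}$ with $i'\neq l$, $s^l_{j,k}(c_{i'})$ is a section of $L^l_j$ defined via a matrix $A\in SU(3)$ with $A\rho(c_{i'})A^{-1}=t_{i'}$ ($\rho\in V^l_g(t_1,\ldots,t_n)$ a representative; $A$ unique up to left multiplication by $T$), taking value given by $A_{jk}$; it vanishes at $[\rho]$ iff $A_{jk}=0$, equivalently iff the $k$-th coordinate of an eigenvector of $\rho(c_{i'})$ with eigenvalue $(t_{i'})_{jj}$ is zero. *)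

From HB Require Import structures.
From mathcomp Require Import all_boot all_order all_algebra.
From mathcomp Require Import complex.
From mathcomp Require Import reals.
Set Implicit Arguments. Unset Strict Implicit. Unset Printing Implicit Defensive.
Import Order.TTheory GRing.Theory Num.Theory.
Local Open Scope ring_scope.

Section Defs.
Variable R : realType.
Local Notation C := (R[i]).
Local Notation M := ('M[C]_3).

Definition adjm (A : M) : M := (map_mx Num.conj A)^T.

Definition inSU3 (A : M) : Prop := A *m adjm A = 1%:M /\ \det A = 1.

Definition inT (A : M) : Prop := inSU3 A /\ is_diag_mx A.

Definition conjG (A B : M) : Prop := exists P : M, inSU3 P /\ P * A * P^-1 = B.

Definition centralizer_is_T (t : M) : Prop :=
  forall P : M, inSU3 P -> (P * t = t * P <-> inT P).

Definition generic (n : nat) (t : 'I_n -> M) : Prop :=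
  (forall q, inT (t q)) /\
  (forall q, centralizer_is_T (t q)) /\
  (forall lam : 'I_n -> C, (forall q, eigenvalue (t q) (lam q)) ->
      \prod_(q < n) lam q != 1).

Definition commG (x y : M) : M := x * y * x^-1 * y^-1.

(* rho : pi_1 -> SU(3) given by images of generators a_m, b_m, c_q satisfying
   prod_m [a_m, b_m] = prod_q c_q *)
Definition is_rep (g n : nat) (a b : 'I_g -> M) (c : 'I_n -> M) : Prop :=
  (forall m, inSU3 (a m)) /\ (forall m, inSU3 (b m)) /\ (forall q, inSU3 (c q)) /\
  \prod_(m < g) commG (a m) (b m) = \prod_(q < n) c q.

Definition in_V (g n : nat) (t : 'I_n -> M) (l : 'I_n)
  (a b : 'I_g -> M) (c : 'I_n -> M) : Prop :=
  is_rep a b c /\ c l = t l /\ (forall q, conjG (c q) (t q)).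

(* vanishing of s^l_{jk}(x) at [rho] (representative rho in V^l): rho(x)_{jk} = 0 *)
Definition s1_vanishes (x : M) (j k : 'I_3) : Prop := x j k = 0.

(* vanishing of s^l_{j,k}(c_q) at [rho]: A_{jk} = 0 where A in SU(3) with
   A rho(c_q) A^-1 = t_q (A unique up to left multiplication by T) *)
Definition s2_vanishes (cq tq : M) (j k : 'I_3) : Prop :=
  exists A : M, inSU3 A /\ A * cq * A^-1 = tq /\ A j k = 0.
End Defs.

From HB Require Import structures.
From mathcomp Require Import all_boot all_order all_algebra.
From mathcomp Require Import complex.
From mathcomp Require Import reals.
Import Order.TTheory GRing.Theory Num.Theory.
Local Open Scope ring_scope.
Set Implicit Arguments. Unset Strict Implicit. Unset Printing Implicit Defensive.

(* The vanishing conditions say that the row vector e_i is a common left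
   eigenvector of all rho(a_m), rho(b_m) and rho(c_q).  For c_q in Y this
   needs an argument: the two frames A with A rho(c_q) A^-1 = t_q witnessing
   the vanishing at (f q, j) and at (f q, k) differ by an element of the
   centralizer T, hence row f(q) of one frame is a multiple of e_i, and that
   row is an eigenvector of rho(c_q).  Each commutator then fixes e_i, so the
   defining relation of pi_1 forces the product of the eigenvalues of the
   rho(c_q) on e_i to be 1; as rho(c_q) is conjugate to t_q these are
   eigenvalues of the t_q, contradicting genericity. *)

Section LeftEigenvectors.
Variables (F : fieldType) (n : nat).
Local Notation M := 'M[F]_n.+1.
Local Notation V := 'rV[F]_n.+1.
Implicit Types (A B P D : M) (v : V).

Lemma delta_mx_row_neq0 (r : 'I_n.+1) : delta_mx 0 r != 0 :> V.
Proof.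
apply/eqP => /matrixP /(_ 0 r); rewrite !mxE !eqxx /= => /eqP.
by rewrite oner_eq0.
Qed.

Lemma mul_delta_mx_row A (r s : 'I_n.+1) :
  (forall x, x != s -> A r x = 0) -> (delta_mx 0 r : V) *m A = A r s *: delta_mx 0 s.
Proof.
move=> Ar0; rewrite -rowE; apply/matrixP => u x; rewrite !mxE (ord1 u) /=.
by have [->|/Ar0 ->] := eqVneq x s; rewrite ?mulr1 ?mulr0.
Qed.

Lemma mul_delta_mx_diag D (r : 'I_n.+1) :
  is_diag_mx D -> (delta_mx 0 r : V) *m D = D r r *: delta_mx 0 r.
Proof.
move=> /is_diag_mxP D_diag; apply: (@mul_delta_mx_row D r r) => x xr.
by rewrite D_diag // eq_sym.
Qed.

Lemma unit_row_neq0 A (r : 'I_n.+1) : A \is a GRing.unit -> row r A != 0.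
Proof.
move=> Au; apply/eqP; rewrite rowE => /(congr1 (mulmx^~ A^-1)).
rewrite -mulmxA mulmxE mulrV // mulmx1 mul0mx; apply/eqP.
exact: delta_mx_row_neq0.
Qed.

Lemma eigvec_inv A v a : A \is a GRing.unit ->
  v *m A = a *: v -> v != 0 -> v *m A^-1 = a^-1 *: v.
Proof.
move=> Au vA v0.
have v_eq : v = a *: (v *m A^-1).
  by rewrite scalemxAl -vA -mulmxA mulmxE mulrV // mulmx1.
have a0 : a != 0 by apply: contraNneq v0 => a0; rewrite v_eq a0 scale0r.
by rewrite {2}v_eq scalerA mulVf // scale1r.
Qed.

Lemma eigvec_commutator A B v a b :
  A \is a GRing.unit -> B \is a GRing.unit ->
  v *m A = a *: v -> v *m B = b *: v -> v != 0 -> v *m (A * B * A^-1 * B^-1) = v.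
Proof.
move=> Au Bu vA vB v0.
have a0 : a != 0 by apply: contraNneq v0 => a0; rewrite -(mulmxK Au v) vA a0 !scale0r mul0mx.
have b0 : b != 0 by apply: contraNneq v0 => b0; rewrite -(mulmxK Bu v) vB b0 !scale0r mul0mx.
rewrite -!mulmxE !mulmxA vA -!scalemxAl vB -!scalemxAl (eigvec_inv Au vA v0).
rewrite -!scalemxAl (eigvec_inv Bu vB v0) !scalerA.
by rewrite (mulrAC a) divff // mul1r divff // scale1r.
Qed.

Lemma eigvec_prod (I : Type) (r : seq I) (G : I -> M) (a : I -> F) v :
  (forall q, v *m G q = a q *: v) -> v *m (\prod_(q <- r) G q) = (\prod_(q <- r) a q) *: v.
Proof.
move=> vG; apply: (big_rec2 (fun x (B : M) => v *m B = x *: v)).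
  by rewrite mulmx1 scale1r.
by move=> q x B _ vB; rewrite -mulmxE mulmxA vG -scalemxAl vB scalerA.
Qed.

Lemma eigenvalue_conj_eigvec P A B v a : P \is a GRing.unit ->
  P * A * P^-1 = B -> v *m A = a *: v -> v != 0 -> eigenvalue B a.
Proof.
move=> Pu <- vA v0; apply/eigenvalueP; exists (v *m P^-1).
  by rewrite -!mulmxE !mulmxA (mulmxKV Pu) vA scalemxAl.
by apply: contraNneq v0 => vP0; rewrite -(mulmxKV Pu v) vP0 mul0mx.
Qed.

Lemma conj_diag_row_eigvec P A D (r : 'I_n.+1) : P \is a GRing.unit ->
  P * A * P^-1 = D -> is_diag_mx D -> row r P *m A = D r r *: row r P.
Proof.
move=> Pu <- PAP_diag.
have -> : row r P *m A = row r (P * A * P^-1) *m P.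
  by rewrite !rowE -!mulmxE -!mulmxA -[P^-1 *m P]/(P^-1 * P) mulVr // mulmx1.
by rewrite rowE mul_delta_mx_diag // -scalemxAl -rowE.
Qed.

Lemma common_eigvec_relation (g m : nat) (a b : 'I_g -> M) (c : 'I_m -> M)
    (al be : 'I_g -> F) (lam : 'I_m -> F) v :
  (forall p, a p \is a GRing.unit) -> (forall p, b p \is a GRing.unit) ->
  \prod_(p < g) (a p * b p * (a p)^-1 * (b p)^-1) = \prod_(q < m) c q ->
  (forall p, v *m a p = al p *: v) -> (forall p, v *m b p = be p *: v) ->
  (forall q, v *m c q = lam q *: v) -> v != 0 -> \prod_(q < m) lam q = 1.
Proof.
move=> au bu rel va vb vc v0.
have : v *m \prod_(q < m) c q = v.
  rewrite -rel (@eigvec_prod _ _ _ (fun=> 1)) ?big1_eq ?scale1r // => p.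
  exact: eigvec_commutator (va p) (vb p) v0.
rewrite (eigvec_prod _ vc) -{2}[v]scale1r => /eqP.
by rewrite -subr_eq0 -scalerBl scaler_eq0 (negbTE v0) orbF subr_eq0 => /eqP.
Qed.

End LeftEigenvectors.

Section SU3.
Variable R : realType.
Local Notation C := R[i].
Local Notation M := 'M[C]_3.
Implicit Types (A B c t : M).

Lemma adjmM A B : adjm (A * B) = adjm B * adjm A.
Proof. by rewrite /adjm -!mulmxE map_mxM trmx_mul. Qed.

Lemma adjmK A : adjm (adjm A) = A.
Proof. by apply/matrixP => x y; rewrite /adjm !mxE conjCK. Qed.

Lemma det_adjm A : \det (adjm A) = Num.conj (\det A).
Proof. by rewrite /adjm det_tr det_map_mx. Qed.

Lemma inSU3_unit A : inSU3 A -> A \is a GRing.unit.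
Proof. by case=> _ detA; rewrite -[_ \is a _]/(A \in unitmx) unitmxE detA unitr1. Qed.

Lemma inSU3_inv A : inSU3 A -> A^-1 = adjm A.
Proof.
move=> SA; case: (SA) => AA _.
by rewrite -[LHS]mulmx1 -AA mulmxA mulmxE mulVr ?mul1r // inSU3_unit.
Qed.

Lemma inSU3M A B : inSU3 A -> inSU3 B -> inSU3 (A * B).
Proof.
move=> [AA detA] [BB detB]; split; last by rewrite -mulmxE det_mulmx detA detB mulr1.
by rewrite adjmM -!mulmxE !mulmxA -(mulmxA A) BB mulmx1.
Qed.

Lemma inSU3V A : inSU3 A -> inSU3 A^-1.
Proof.
move=> SA; rewrite inSU3_inv //; split; last by rewrite det_adjm SA.2 conjC1.
by rewrite adjmK; apply: mulmx1C; exact: SA.1.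
Qed.

Lemma ord3_other (i j k x : 'I_3) :
  i != j -> i != k -> j != k -> x != i -> x = j \/ x = k.
Proof.
case: i => [[|[|[|//]]] ?]; case: j => [[|[|[|//]]] ?];
case: k => [[|[|[|//]]] ?]; case: x => [[|[|[|//]]] ?] //= _ _ _ _;
by [left; apply/val_inj | right; apply/val_inj].
Qed.

Lemma mul_delta_mx_row3 A (r i j k : 'I_3) : i != j -> i != k -> j != k ->
  A r j = 0 -> A r k = 0 -> (delta_mx 0 r : 'rV_3) *m A = A r i *: delta_mx 0 i.
Proof.
move=> ij ik jk Arj Ark; apply: (@mul_delta_mx_row _ _ A r i) => x /(ord3_other ij ik jk).
by case=> ->.
Qed.

Lemma s2_vanishes_common_frame c t (f j k : 'I_3) : centralizer_is_T t ->
  s2_vanishes c t f j -> s2_vanishes c t f k ->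
  exists A, [/\ inSU3 A, A * c * A^-1 = t, A f j = 0 & A f k = 0].
Proof.
move=> centT [A1 [SA1 [A1c A1fj]]] [A2 [SA2 [A2c A2fk]]].
exists A1; split=> //.
have A1u := inSU3_unit SA1.
pose D := A2 * A1^-1.
have A2_eq : D * A1 = A2 by rewrite divrK.
have SD : inSU3 D by apply: inSU3M; last exact: inSU3V.
have [_ D_diag] : inT D.
  by apply/(centT _ SD).1; rewrite -{1}A1c -A2c !mulrA !divrK // inSU3_unit.
clearbody D.
have A2_row : row f A2 = D f f *: row f A1.
  by rewrite -A2_eq -mulmxE !rowE mulmxA mul_delta_mx_diag // -scalemxAl.
have Dff : D f f != 0.
  apply: contra (unit_row_neq0 f (inSU3_unit SD)) => /eqP Dff0.
  by rewrite rowE mul_delta_mx_diag // Dff0 scale0r.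
move/matrixP: A2_row => /(_ 0 k); rewrite !mxE A2fk => /esym/eqP.
by rewrite mulf_eq0 (negbTE Dff) => /eqP.
Qed.

Lemma s2_vanishes_s1_vanishes c t (f i j k : 'I_3) :
  i != j -> i != k -> j != k -> centralizer_is_T t -> is_diag_mx t ->
  s2_vanishes c t f j -> s2_vanishes c t f k ->
  s1_vanishes c i j /\ s1_vanishes c i k.
Proof.
move=> ij ik jk centT t_diag s2j s2k.
have [A [SA Ac Afj Afk]] := s2_vanishes_common_frame centT s2j s2k.
have Af := mul_delta_mx_row3 ij ik jk Afj Afk; rewrite -rowE in Af.
have Afi : A f i != 0.
  apply: contra (unit_row_neq0 f (inSU3_unit SA)) => /eqP Afi0.
  by rewrite Af Afi0 scale0r.
have := conj_diag_row_eigvec f (inSU3_unit SA) Ac t_diag.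
rewrite Af -scalemxAl scalerA mulrC -scalerA => /(scalerI Afi) ei_c.
split.
- by move/matrixP: ei_c => /(_ 0 j); rewrite -rowE !mxE eq_sym (negbTE ij) mulr0.
- by move/matrixP: ei_c => /(_ 0 k); rewrite -rowE !mxE eq_sym (negbTE ik) mulr0.
Qed.

End SU3.

Theorem lemma2p7 (R : realType) (g n : nat) (t : 'I_n -> 'M[R[i]]_3)
  (l : 'I_n) (X Y : {set 'I_n}) (i j k : 'I_3) (f : 'I_n -> 'I_3) :
  (2 <= g)%N -> (1 <= n)%N -> generic t ->
  X :&: Y = set0 -> X :|: Y = [set~ l] ->
  i != j -> i != k -> j != k ->
  ~ exists (a b : 'I_g -> 'M[R[i]]_3) (c : 'I_n -> 'M[R[i]]_3),
      in_V t l a b c /\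
      (forall m : 'I_g,
         s1_vanishes (a m) i j /\ s1_vanishes (a m) i k /\
         s1_vanishes (b m) i j /\ s1_vanishes (b m) i k) /\
      (forall q, q \in X -> s1_vanishes (c q) i j /\ s1_vanishes (c q) i k) /\
      (forall q, q \in Y -> s2_vanishes (c q) (t q) (f q) j /\
                            s2_vanishes (c q) (t q) (f q) k).
Proof.
move=> _ _ [tT [centT t_gen]] _ XUY ij ik jk.
move=> [a [b [c [[[Sa [Sb [_ rel]]] [cl conj_ct]] [ab_van [X_van Y_van]]]]]].
have c_van q : s1_vanishes (c q) i j /\ s1_vanishes (c q) i k.
  have [->|ql] := eqVneq q l.
    by rewrite /s1_vanishes cl; move/is_diag_mxP: (tT l).2 => tl_diag; rewrite !tl_diag.
  have /setUP[/X_van //|/Y_van [s2j s2k]] : q \in X :|: Y by rewrite XUY !inE.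
  exact: s2_vanishes_s1_vanishes ij ik jk (centT q) (tT q).2 s2j s2k.
pose ei : 'rV[R[i]]_3 := delta_mx 0 i.
have eigvec (A : 'M[R[i]]_3) : A i j = 0 -> A i k = 0 -> ei *m A = A i i *: ei.
  exact: mul_delta_mx_row3.
have ei0 : ei != 0 := delta_mx_row_neq0 _ i.
suff [c_eig c_prod] : (forall q, eigenvalue (t q) (c q i i)) /\ \prod_q c q i i = 1.
  by move: (t_gen _ c_eig); rewrite c_prod eqxx.
split.
- move=> q; have [P [SP Pc]] := conj_ct q.
  exact: eigenvalue_conj_eigvec (inSU3_unit SP) Pc (eigvec _ (c_van q).1 (c_van q).2) ei0.
- apply: (common_eigvec_relation _ _ rel _ _ _ ei0).
  + by move=> p; exact: inSU3_unit.
  + by move=> p; exact: inSU3_unit.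
  + by move=> p; have [? [? _]] := ab_van p; exact: eigvec.
  + by move=> p; have [_ [_ [? ?]]] := ab_van p; exact: eigvec.
  + by move=> q; exact: eigvec (c_van q).1 (c_van q).2.
Qed.
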